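(* Let $(\mathbb S,+,\cdot)$ be an S-Field. Then for every $\alpha\in\mathbb S_0$ with $\alpha\neq0$, $\frac{\alpha}{0}=q_0^*(\alpha)$ exists and is a unique element, and distinct such $\alpha$ give distinct values: if $\alpha,\beta\in\mathbb S_0\setminus\{0\}$ and $\alpha\neq\beta$ then $\frac{\alpha}{0}\neq\frac{\beta}{0}$.
   Context: An S-Structure is a triple $(\mathbb S,+,\cdot)$ where $\mathbb S$ is a set and $+,\cdot$ are binary operations on $\mathbb S$ such that: $(\mathbb S,+)$ is a commutative group with identity $0$ (the inverse of $s$ is written $-s$, and $s-t:=s+(-t)$); $\mathbb S$ is closed under $\cdot$; and there exists $s\in\mathbb S$ with $0\cdot s\neq 0$ or $s\cdot 0\neq 0$. Multiplication binds tighter than addition. The structures considered come with a distinguished element of $\mathbb S$ denoted $1$. It is Commutative if $s\cdot t=t\cdot s$ for all $s,t$. For a Commutative S-Structure and $\alpha\in\mathbb S$, put $\mathbb S_\alpha=\{s\in\mathbb S:0\cdot s=s\cdot 0=\alpha\}$ and $\Lambda=\{\alpha\in\mathbb S:\mathbb S_\alpha\neq\emptyset\}$. Wheel Distributive: $s\cdot(t+r)+(s\cdot 0)=(s\cdot t)+(s\cdot r)$ for all $s,t,r\in\mathbb S$. S-Associative: for all $m,n\in\mathbb S_0$ and $s\in\mathbb S$, $m\cdot(n\cdot s)=(m\cdot n)\cdot s-([(m-1)\cdot(n-1)]\cdot(0\cdot s))$. Base: if $\mathbb S_0\neq\emptyset$ and $\alpha\in\Lambda$, $q\in\mathbb S_\alpha$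 is a Base for $\mathbb S_\alpha$ if $q+\beta\in\mathbb S_\alpha$ for all $\beta\in\mathbb S_0$ and every $s\in\mathbb S_\alpha$ equals $q+\beta$ for some $\beta\in\mathbb S_0$. Coordinated: $\mathbb S_0\neq\emptyset$ and every $\mathbb S_\alpha$ with $\alpha\in\Lambda$ has a Base. Standard Bases: a Coordinated Commutative S-Structure has Standard Bases if there is a specified element $q_0(1)\in\mathbb S_1$ which is a Base for $\mathbb S_1$, and for every $\alpha\in\Lambda$ the element $q_0(\alpha):=\alpha\cdot(q_0(1)+1)-1$ lies in $\mathbb S_\alpha$ and is a Base for $\mathbb S_\alpha$. An Essential S-Structure is an S-Structure that is Commutative, Wheel Distributive, S-Associative, has Standard Bases (in particular is Coordinated), satisfies $0,1\in\mathbb S_0$, and satisfies $\mathbb S_0=\{1\cdot x:x\in\mathbb S_0\}$. A Unity is an element $e\in\Lambda$ with $e\cdot s=s\cdot e=s$ for all $s\in\mathbb S$. Scalar Inverses: the structure has a Unity $e$ and for every $x\in\mathbb S_0$ with $x\neq 0$ there is $x^{-1}\in\mathbb S_0$ with $x\cdot x^{-1}=x^{-1}\cdot x=e$. An S-Ring is an Essential S-Structure with a Unity; an S-Field is an S-Ring with Scalar Inverses. Reversible: for $\alpha\in\Lambda$, $q_0(\alpha)$ is Reversible if there exists $\alpha^*\in\Lambda$ with $q_0(1)=\alpha^*\cdot(q_0(\alpha)+\alpha)-\alpha$; then $q_0^*(\alpha):=q_0(\alpha)$. Division By Zero: in an S-Field, for $\alpha\in\mathbb S_0$ with $\alpha\neq0$,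 $\frac{\alpha}{0}:=q_0^*(\alpha)$. *)

(* the additive group (S,+) is a zmodType; the multiplication
   is an arbitrary binary operation [mul], the distinguished element is [one],
   and the specified element q_0(1) is [q01]. *)
From mathcomp Require Import all_boot all_algebra.
Set Implicit Arguments. Unset Strict Implicit. Unset Printing Implicit Defensive.
Import GRing.Theory.
Local Open Scope ring_scope.

Section SStructures.
Variables (S : zmodType) (mul : S -> S -> S) (one : S) (q01 : S).

(* S-Structure: (S,+) commutative group (given by zmodType), closure under
   mul is given by typing, and some s with 0*s <> 0 or s*0 <> 0. *)
Definition is_SStructure : Prop :=
  exists s : S, mul 0 s <> 0 \/ mul s 0 <> 0.

Definition is_Commutative : Prop := forall s t, mul s t = mul t s.

Definition Sa (alpha s : S) : Prop := mul 0 s = alpha /\ mul s 0 = alpha.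

Definition Lambda (alpha : S) : Prop := exists s, Sa alpha s.

Definition is_WheelDistributive : Prop :=
  forall s t r, mul s (t + r) + mul s 0 = mul s t + mul s r.

Definition is_SAssociative : Prop :=
  forall m n s, Sa 0 m -> Sa 0 n ->
    mul m (mul n s) = mul (mul m n) s - mul (mul (m - one) (n - one)) (mul 0 s).

Definition is_Base (alpha q : S) : Prop :=
  Sa alpha q /\
  (forall beta, Sa 0 beta -> Sa alpha (q + beta)) /\
  (forall s, Sa alpha s -> exists beta, Sa 0 beta /\ s = q + beta).

Definition is_Coordinated : Prop :=
  (exists x, Sa 0 x) /\ forall alpha, Lambda alpha -> exists q, is_Base alpha q.

Definition q0 (alpha : S) : S := mul alpha (q01 + one) - one.

Definition has_StandardBases : Prop :=
  is_Coordinated /\ Sa one q01 /\ is_Base one q01 /\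
  forall alpha, Lambda alpha -> Sa alpha (q0 alpha) /\ is_Base alpha (q0 alpha).

Definition is_Essential : Prop :=
  is_SStructure /\ is_Commutative /\ is_WheelDistributive /\ is_SAssociative /\
  has_StandardBases /\ Sa 0 0 /\ Sa 0 one /\
  (forall s, Sa 0 s <-> exists x, Sa 0 x /\ s = mul one x).

Definition is_Unity (e : S) : Prop :=
  Lambda e /\ forall s, mul e s = s /\ mul s e = s.

Definition has_ScalarInverses : Prop :=
  exists e, is_Unity e /\
    forall x, Sa 0 x -> x <> 0 ->
      exists y, Sa 0 y /\ mul x y = e /\ mul y x = e.

Definition is_SRing : Prop := is_Essential /\ exists e, is_Unity e.

Definition is_SField : Prop := is_SRing /\ has_ScalarInverses.

Definition Reversible (alpha : S) : Prop :=
  Lambda alpha /\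
  exists alpha_star, Lambda alpha_star /\
    q01 = mul alpha_star (q0 alpha + alpha) - alpha.

(* alpha/0 := q_0^*(alpha) = q_0(alpha); it is defined when alpha is in S_0,
   alpha <> 0 and q_0(alpha) is Reversible. *)
Definition div0_defined (alpha : S) : Prop :=
  Sa 0 alpha /\ alpha <> 0 /\ Reversible alpha.

Definition div0 (alpha : S) : S := q0 alpha.

End SStructures.

(* Wheel distributivity makes [mul a] additive whenever [a * 0 = 0], in
   particular for every [a] in [S_0], so most computations are ring-like.
   S-associativity with [n] the unity [e] and [s = q_0(1)] (where
   [0 * q_0(1) = 1]) forces [1 * ((m - 1) * (e - 1)) = 0] for all [m] in [S_0];
   for [m = 0] and for [m] with [e = 1 * m] this yields [e = 1].  Once [1] is a
   unity, S-associativity with [m = 0] gives [0 * q_0(alpha) = alpha] for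
   [alpha] in [S_0], so [alpha |-> alpha/0] is injective and [q_0(alpha)]
   lies in [S_alpha]; S-associativity with [m = alpha^-1, n = alpha] shows that
   [alpha^-1] reverses [q_0(alpha)]. *)
From mathcomp Require Import all_boot all_algebra.
Set Implicit Arguments. Unset Strict Implicit. Unset Printing Implicit Defensive.
Import GRing.Theory.
Local Open Scope ring_scope.

Section SFieldTheory.
Variables (S : zmodType) (mul : S -> S -> S) (one q01 : S).
Hypothesis mulC : is_Commutative mul.
Hypothesis mulWD : is_WheelDistributive mul.

Lemma mulDr_of_mulr0 a : mul a 0 = 0 ->
  forall t r, mul a (t + r) = mul a t + mul a r.
Proof. by move=> a0 t r; rewrite -mulWD a0 addr0. Qed.

Lemma mulBr_of_mulr0 a : mul a 0 = 0 ->
  forall t r, mul a (t - r) = mul a t - mul a r.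
Proof. by move=> a0 t r; rewrite -[in mul a t](subrK r t) mulDr_of_mulr0 ?addrK. Qed.

Lemma Sa0E a : Sa mul 0 a <-> mul 0 a = 0.
Proof. by split=> [[]|a0] //; split; rewrite // mulC. Qed.

Hypothesis mul00 : mul 0 0 = 0.

Lemma Sa0B a b : Sa mul 0 a -> Sa mul 0 b -> Sa mul 0 (a - b).
Proof.
by move=> /Sa0E a0 /Sa0E b0; apply/Sa0E; rewrite mulBr_of_mulr0 // a0 b0 subr0.
Qed.

Lemma mulr0_Sa0 a : Sa mul 0 a -> mul a 0 = 0.
Proof. by case. Qed.

Hypothesis SA : is_SAssociative mul one.
Hypothesis Sa0_one : Sa mul 0 one.
Hypothesis mul0_q01 : mul 0 q01 = one.
Hypothesis Sa0_mul_one :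
  forall s, Sa mul 0 s -> exists x, Sa mul 0 x /\ s = mul one x.

Lemma unity_eq_one e : is_Unity mul e -> e = one.
Proof.
move=> [_ unity_e].
have mule s : mul e s = s by have [] := unity_e s.
have mulse s : mul s e = s by have [] := unity_e s.
have Sa0_e : Sa mul 0 e by apply/Sa0E; rewrite mulC.
have one0 : mul one 0 = 0 by apply: mulr0_Sa0.
set w := mul one one.
have annihilate m : Sa mul 0 m ->
    mul one m - w - mul one (mul one m) + mul one w = 0.
  move=> Sa0_m; have := SA q01 Sa0_m Sa0_e.
  rewrite mule mulse mul0_q01 -[LHS]addr0 => /addrI /esym /eqP.
  rewrite oppr_eq0 mulC => /eqP.
  have Sa0_m1 : Sa mul 0 (m - one) by apply: Sa0B.
  rewrite mulBr_of_mulr0 ?mulr0_Sa0 // mulse [mul _ one]mulC.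
  by rewrite !mulBr_of_mulr0 // => <-; rewrite opprB addrA addrAC.
have w_fixed : mul one w = w.
  have /eqP := annihilate 0 (iffRL (Sa0E 0) mul00).
  by rewrite !one0 sub0r subr0 addrC subr_eq0 => /eqP.
have [x [Sa0_x ex]] := Sa0_mul_one Sa0_e.
rewrite -[RHS](mule one) mulC ex; apply/eqP.
by have /eqP := annihilate x Sa0_x; rewrite w_fixed addrAC subrK subr_eq0.
Qed.

Hypothesis mul1r : forall s, mul one s = s.

Lemma mulr1 s : mul s one = s.
Proof. by rewrite mulC mul1r. Qed.

Lemma mulrN1_of_mulr0 a : mul a 0 = 0 -> mul a (- one) = - a.
Proof. by move=> a0; rewrite -sub0r mulBr_of_mulr0 // a0 mulr1 sub0r. Qed.

Lemma mul0_q01D1 : mul 0 (q01 + one) = one.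
Proof. by rewrite mulDr_of_mulr0 // mul0_q01 (iffLR (Sa0E one) Sa0_one) addr0. Qed.

Lemma mul0_q0 a : Sa mul 0 a -> mul 0 (q0 mul one q01 a) = a.
Proof.
move=> Sa0_a; have Sa00 : Sa mul 0 0 by apply/Sa0E.
have Sa0_a1 : Sa mul 0 (a - one) by apply: Sa0B.
rewrite /q0 mulBr_of_mulr0 // (SA _ Sa00 Sa0_a) mul0_q01D1 mulr1.
rewrite (iffLR (Sa0E a) Sa0_a) (iffLR (Sa0E one) Sa0_one) mul0_q01D1.
by rewrite sub0r mulC mulrN1_of_mulr0 ?mulr0_Sa0 // opprK subr0 addrC subrK.
Qed.

Lemma Lambda_Sa0 a : Sa mul 0 a -> Lambda mul a.
Proof.
by move=> Sa0_a; exists (q0 mul one q01 a); split; last rewrite mulC; exact: mul0_q0.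
Qed.

Lemma reversible_of_inverse a y :
  Sa mul 0 a -> Sa mul 0 y -> mul y a = one -> Reversible mul one q01 a.
Proof.
move=> Sa0_a Sa0_y ya1; split; first exact: Lambda_Sa0.
exists y; split; first exact: Lambda_Sa0.
have y0 := mulr0_Sa0 Sa0_y.
have Sa0_y1 : Sa mul 0 (y - one) by apply: Sa0B.
have expand : mul (y - one) (a - one) = one - a - (y - one).
  rewrite mulBr_of_mulr0 ?mulr0_Sa0 // mulr1 mulC mulBr_of_mulr0 ?mulr0_Sa0 //.
  by rewrite mulC ya1 mulr1.
rewrite /q0 mulDr_of_mulr0 // mulBr_of_mulr0 // (SA _ Sa0_y Sa0_a) ya1 mul1r.
rewrite mul0_q01D1 !mulr1 expand !opprB !addrA (addrAC q01 one y) addrK.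
by rewrite (addrAC _ (- one) (- y)) (addrAC q01 y a) !addrK subrK addrK.
Qed.

End SFieldTheory.

Theorem theorem4p2p3 (S : zmodType) (mul : S -> S -> S) (one q01 : S) :
  is_SField mul one q01 ->
  (forall alpha : S, Sa mul 0 alpha -> alpha <> 0 ->
     div0_defined mul one q01 alpha /\
     exists! x : S, x = div0 mul one q01 alpha) /\
  (forall alpha beta : S, Sa mul 0 alpha -> alpha <> 0 ->
     Sa mul 0 beta -> beta <> 0 -> alpha <> beta ->
     div0 mul one q01 alpha <> div0 mul one q01 beta).
Proof.
move=> [[[_ [mulC [mulWD [SA [[_ [[mul0_q01 _] _]] [[mul00 _] [Sa0_one Ess]]]]]]] _]
        [e [unity_e inverses]]].
have e_one := unity_eq_one mulC mulWD mul00 SA Sa0_one mul0_q01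
  (fun s => iffLR (Ess s)) unity_e.
have mul1r s : mul one s = s by rewrite -e_one; case: unity_e => _ /(_ s) [].
have mul0_div0 := mul0_q0 mulC mulWD mul00 SA Sa0_one mul0_q01 mul1r.
split=> [a Sa0_a a0 | a b Sa0_a _ Sa0_b _ ab div0_ab].
- have [y [Sa0_y [_ ya1]]] := inverses a Sa0_a a0.
  rewrite e_one in ya1.
  split; last by exists (div0 mul one q01 a); split=> // x ->.
  split=> //; split=> //.
  exact: (reversible_of_inverse mulC mulWD mul00 SA Sa0_one mul0_q01 mul1r
            Sa0_a Sa0_y).
- apply: ab; rewrite -(mul0_div0 a Sa0_a) -(mul0_div0 b Sa0_b).
  by move: div0_ab; rewrite /div0 => ->.
Qed.
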